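(* Let $r\in\{1,\infty\}$ and let $N_1,\ldots,N_s\geqslant2$ be pairwise coprime integers with $N=N_1\cdots N_s$. Then $\mathbb{G}_r(N)$ and $\mathbb{G}_r(N_1)\times\cdots\times\mathbb{G}_r(N_s)$ are isomorphic as topological groups.
   Context: All groups are Abelian. A value on $G$ is $p\colon G\to[0,\infty)$ with $p(x)=0\iff x=0$, $p(-x)=p(x)$, $p(x+y)\leqslant p(x)+p(y)$; it induces the metric $p(x-y)$. Class $\mathcal{O}_0$: $\lim_n p(na)/n=0$ for all $a$. $\mathfrak{G}_r(N)$: separable valued Abelian groups of class $\mathcal{O}_0$ with $p\leqslant r$ (vacuous if $r=\infty$) and of exponent $N$ if $N\neq0$. $\mathbb{G}_r(N)$ is the valued Abelian group, unique up to isometric group isomorphism, which (G1) is complete and in $\mathfrak{G}_r(N)$; (G2) for every finite valued Abelian group $(H,+,q)$ (of exponent $N$ if $N\neq0$) with $q\leqslant r$, subgroup $K$, isometric homomorphism $\varphi\colon K\to\mathbb{G}_r(N)$ and $\varepsilon\in(0,1)$, there is a homomorphism $\varphi_\varepsilon\colon H\to\mathbb{G}_r(N)$ with $p(\varphi(x)-\varphi_\varepsilon(x))\leqslant\varepsilon$ on $K$ and $(1-\varepsilon)q\leqslant p\circ\varphi_\varepsilon\leqslant(1+\varepsilon)q$ on $H$; (G3) if $N=0$, finite-order elements are dense. *)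

From HB Require Import structures.
From mathcomp Require Import all_boot all_order all_algebra.
From mathcomp Require Import Rstruct.
Notation R := Rdefinitions.R.
Set Implicit Arguments. Unset Strict Implicit. Unset Printing Implicit Defensive.
Import Order.TTheory GRing.Theory Num.Theory.
Local Open Scope ring_scope.

Definition is_value (G : zmodType) (p : G -> R) : Prop :=
  [/\ (forall x, 0 <= p x),
      (forall x, p x = 0 <-> x = 0),
      (forall x, p (- x) = p x) &
      (forall x y, p (x + y) <= p x + p y)].

(* the bound "p <= r"; r = None encodes r = +oo (vacuous) *)
Definition bounded_by (r : option R) (x : R) : Prop :=
  match r with Some b => x <= b | None => True end.

Definition class_O0 (G : zmodType) (p : G -> R) : Prop :=
  forall a : G, forall eps : R, 0 < eps ->
    exists M : nat, forall n : nat, (M <= n)%N ->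
      `|p (a *+ n) / n%:R - 0| < eps.

Definition separable (G : zmodType) (p : G -> R) : Prop :=
  exists d : nat -> G, forall x : G, forall eps : R, 0 < eps ->
    exists n, p (x - d n) < eps.

Definition complete (G : zmodType) (p : G -> R) : Prop :=
  forall u : nat -> G,
    (forall eps : R, 0 < eps -> exists M : nat, forall m n : nat,
        (M <= m)%N -> (M <= n)%N -> p (u m - u n) < eps) ->
    exists l : G, forall eps : R, 0 < eps -> exists M : nat, forall n : nat,
        (M <= n)%N -> p (u n - l) < eps.

Definition exponent_cond (G : zmodType) (N : nat) : Prop :=
  N <> 0%N -> forall x : G, x *+ N = 0.

Definition in_frakG (r : option R) (N : nat) (G : zmodType) (p : G -> R) : Prop :=
  [/\ is_value p, separable p, class_O0 p,
      (forall x, bounded_by r (p x)) & exponent_cond G N].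

(* (G1), (G2), (G3): characterization of GG_r(N) (unique up to isometric
   group isomorphism) *)
Definition is_GG (r : option R) (N : nat) (G : zmodType) (p : G -> R) : Prop :=
  [/\ complete p /\ in_frakG r N p,
      (forall (H : finZmodType) (q : H -> R),
          is_value q -> exponent_cond H N -> (forall x, bounded_by r (q x)) ->
          forall (K : {set H}),
            (0 \in K) -> (forall x y, x \in K -> y \in K -> x - y \in K) ->
          forall phi : H -> G,
            (forall x y, x \in K -> y \in K -> phi (x + y) = phi x + phi y) ->
            (forall x y, x \in K -> y \in K -> p (phi x - phi y) = q (x - y)) ->
          forall eps : R, 0 < eps < 1 ->
          exists phi_e : H -> G,
            [/\ (forall x y, phi_e (x + y) = phi_e x + phi_e y),
                (forall x, x \in K -> p (phi x - phi_e x) <= eps) &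
                (forall x, (1 - eps) * q x <= p (phi_e x) /\
                           p (phi_e x) <= (1 + eps) * q x)]) &
      (N = 0%N -> forall x : G, forall eps : R, 0 < eps ->
          exists y : G, (exists n : nat, (0 < n)%N /\ y *+ n = 0) /\
                        p (x - y) < eps)].

(* Isomorphism of topological groups between (G,p) (metric topology) and the
   finite product prod_i Gs i with the product topology; for a finite product
   the boxes {z | forall i, ps i (z i - y i) < d} form a neighbourhood base
   at y of the product topology. *)
Definition top_group_iso (G : zmodType) (p : G -> R) (s : nat)
    (Gs : 'I_s -> zmodType) (ps : forall i, Gs i -> R) : Prop :=
  exists (f : G -> forall i, Gs i) (g : (forall i, Gs i) -> G),
    [/\ (forall x y i, f (x + y) i = f x i + f y i),
        cancel f g, cancel g f,
        (forall x : G, forall eps : R, 0 < eps -> exists2 d : R, 0 < d &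
           forall y : G, p (y - x) < d -> forall i, ps i (f y i - f x i) < eps) &
        (forall y : (forall i, Gs i), forall eps : R, 0 < eps -> exists2 d : R, 0 < d &
           forall z : (forall i, Gs i),
             (forall i, ps i (z i - y i) < d) -> p (g z - g y) < eps)].

(* A group G of exponent N = N_1 ... N_s with pairwise coprime N_i is the
   direct sum of its N_i-torsion subgroups G[N_i], the projections being
   x |-> e_i x for Chinese-remainder idempotents e_i; for a value these
   projections and the summation map are Lipschitz, so the decomposition is
   a homeomorphism onto the product.  Inside GG_r(N), each G[N_i] is complete,
   separable and inherits the approximate extension property (G2) for finite
   groups of exponent N_i, so it is a copy of GG_r(N_i): two such groups are
   isometrically isomorphic by a back-and-forth argument, alternately extending
   almost isometric homomorphisms between finite subgroups with errors 2^-k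
   (each extension applies (G2) to the amalgam of the two finite groups glued
   along the current map) and passing to the limit. *)

From HB Require Import structures.
From mathcomp Require Import all_boot all_order all_algebra.
From mathcomp Require Import Rstruct.
From mathcomp Require Import lra zify.
From Stdlib Require Import ClassicalEpsilon ChoiceFacts FunctionalExtensionality.
Set Implicit Arguments. Unset Strict Implicit. Unset Printing Implicit Defensive.
Import Order.TTheory GRing.Theory Num.Theory.
Local Open Scope ring_scope.

Lemma subrACA (G : zmodType) (a b c d : G) : (a - b) - (c - d) = (a - c) - (b - d).
Proof. by rewrite !opprB addrACA [RHS]addrACA [- b + _]addrC. Qed.

Section Value.
Variables (G : zmodType) (p : G -> R) (hp : is_value p).

Lemma value_ge0 x : 0 <= p x. Proof. by case: hp. Qed.
Lemma value0 : p 0 = 0. Proof. by case: hp => _ h _ _; apply/h. Qed.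
Lemma valueN x : p (- x) = p x. Proof. by case: hp. Qed.
Lemma valueD x y : p (x + y) <= p x + p y. Proof. by case: hp. Qed.
Lemma valueB x y : p (x - y) <= p x + p y. Proof. by rewrite -(valueN y) valueD. Qed.
Lemma value_distC x y : p (x - y) = p (y - x). Proof. by rewrite -valueN opprB. Qed.

Lemma value_le0_eq x y : p (x - y) <= 0 -> x = y.
Proof.
case: hp => _ h _ _ hle; apply/eqP; rewrite -subr_eq0; apply/eqP/h.
by apply: le_anti; rewrite hle value_ge0.
Qed.

Lemma value_dist_triangle x y z : p (x - z) <= p (x - y) + p (y - z).
Proof. by have := valueD (x - y) (y - z); rewrite addrA subrK. Qed.

Lemma value_subr_le x y : p x - p y <= p (x - y).
Proof. by have := valueD (x - y) y; rewrite subrK; lra. Qed.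

Lemma value_lipschitz x y : `|p x - p y| <= p (x - y).
Proof.
rewrite ler_norml value_subr_le andbT.
by have := value_subr_le y x; rewrite value_distC; lra.
Qed.

Lemma value_dist_sub x1 x2 y1 y2 :
  p ((x1 - x2) - (y1 - y2)) <= p (x1 - y1) + p (x2 - y2).
Proof. by rewrite subrACA valueB. Qed.

Lemma value_dist_addB x1 x2 x3 y1 y2 y3 :
  p (x1 + x2 - x3) <= p (y1 + y2 - y3) + p (x1 - y1) + p (x2 - y2) + p (x3 - y3).
Proof.
have -> : x1 + x2 - x3 = (y1 + y2 - y3) + ((x1 - y1) + (x2 - y2) - (x3 - y3)).
  by rewrite [x1 - y1 + _]addrACA -opprD subrACA [RHS]addrC subrK.
apply: le_trans (valueD _ _) _.
by have := valueB (x1 - y1 + (x2 - y2)) (x3 - y3); have := valueD (x1 - y1) (x2 - y2); lra.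
Qed.

Lemma value_mulrn x n : p (x *+ n) <= n%:R * p x.
Proof.
elim: n => [|n IH]; first by rewrite mulr0n value0 mul0r.
by rewrite mulrSr -natr1 mulrDl mul1r; apply: le_trans (valueD _ _) _; lra.
Qed.

Lemma value_sum (I : Type) (s : seq I) (w : I -> G) :
  p (\sum_(i <- s) w i) <= \sum_(i <- s) p (w i).
Proof.
elim/big_ind2: _ => [|x1 y1 x2 y2 h1 h2|//]; first by rewrite value0.
by apply: le_trans (valueD _ _) _; lra.
Qed.

End Value.

Lemma ler_addgt0_scaled (F : numFieldType) (a b c : F) :
  0 < c -> (forall e, 0 < e -> a <= b + c * e) -> a <= b.
Proof.
move=> c_gt0 h; apply/ler_addgt0Pr => e e_gt0.
by have := h (e / c) (divr_gt0 e_gt0 c_gt0); rewrite mulrC divfK ?gt_eqF.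
Qed.

Definition tol (k : nat) : R := ((2 ^ k)%:R)^-1.

Lemma tol_gt0 k : 0 < tol k. Proof. by rewrite invr_gt0 ltr0n expn_gt0. Qed.

Lemma tolS k : tol k.+1 = tol k / 2.
Proof. by rewrite /tol expnSr natrM invfM. Qed.

Lemma tol_le k m : (k <= m)%N -> tol m <= tol k.
Proof. by move=> km; rewrite lef_pV2 ?posrE ?ltr0n ?expn_gt0 // ler_nat leq_pexp2l. Qed.

Lemma tol_small e : 0 < e -> exists k, tol k < e.
Proof.
move=> e_gt0; have /archi_boundP : 0 <= e^-1 by rewrite invr_ge0 ltW.
set k := Num.bound _ => hk.
exists k; rewrite -[e]invrK ltf_pV2 ?posrE ?invr_gt0 ?ltr0n ?expn_gt0 //.
by apply: lt_trans hk _; rewrite ltr_nat ltn_expl.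
Qed.

Lemma bigmin_mem d (T : orderType d) (I : eqType) (s : seq I) (x0 : T) (F : I -> T) :
  \big[Order.min/x0]_(i <- s) F i = x0 \/
  exists2 i, i \in s & \big[Order.min/x0]_(i <- s) F i = F i.
Proof.
elim: s => [|j s IH]; rewrite ?big_nil ?big_cons; first by left.
case: leP => _; first by right; exists j; rewrite ?mem_head.
case: IH => [->|[i si ->]]; [by left | by right; exists i; rewrite // inE si orbT].
Qed.

Lemma seq_ub (T : realDomainType) (I : eqType) (s : seq I) (F : I -> T) :
  exists2 b, 0 <= b & forall i, i \in s -> F i <= b.
Proof.
elim: s => [|j s [b b0 hb]]; first by exists 0.
exists (Num.max (F j) b) => [|i]; first by rewrite le_max b0 orbT.
by rewrite inE le_max => /predU1P [->|/hb ->]; rewrite ?lexx ?orbT.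
Qed.

Definition subgroup (G : zmodType) (S : G -> Prop) :=
  S 0 /\ forall x y, S x -> S y -> S (x - y).

Definition additive_on (G G' : zmodType) (S : G -> Prop) (f : G -> G') :=
  forall x y, S x -> S y -> f (x + y) = f x + f y.

Section Subgroup.
Variables (G G' : zmodType) (S : G -> Prop) (hS : subgroup S).

Lemma subgroup0 : S 0. Proof. by case: hS. Qed.
Lemma subgroupB x y : S x -> S y -> S (x - y). Proof. by case: hS => _; apply. Qed.
Lemma subgroupN x : S x -> S (- x).
Proof. by move=> Sx; have := subgroupB subgroup0 Sx; rewrite add0r. Qed.
Lemma subgroupD x y : S x -> S y -> S (x + y).
Proof. by move=> Sx Sy; rewrite -[y]opprK; apply/subgroupB/subgroupN. Qed.
Lemma subgroupMn x n : S x -> S (x *+ n).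
Proof.
move=> Sx; elim: n => [|n IH]; first by rewrite mulr0n; apply: subgroup0.
by rewrite mulrS; apply: subgroupD.
Qed.

Variables (f : G -> G') (f_add : additive_on S f).

Lemma additive0 : f 0 = 0.
Proof.
have := f_add subgroup0 subgroup0; rewrite addr0 => h.
by apply: (addrI (f 0)); rewrite addr0 -h.
Qed.
Lemma additiveN x : S x -> f (- x) = - f x.
Proof.
move=> Sx; have := f_add Sx (subgroupN Sx); rewrite subrr additive0 => h.
by apply/eqP; rewrite -addr_eq0 addrC -h.
Qed.
Lemma additiveB x y : S x -> S y -> f (x - y) = f x - f y.
Proof. by move=> Sx Sy; rewrite f_add ?additiveN //; apply: subgroupN. Qed.
Lemma additiveMn x n : S x -> f (x *+ n) = f x *+ n.
Proof.
move=> Sx; elim: n => [|n IH]; first by rewrite !mulr0n additive0.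
by rewrite !mulrS f_add -?IH //; apply: subgroupMn.
Qed.

End Subgroup.

Lemma subgroup_torsion (G : zmodType) (M : nat) : subgroup (fun x : G => x *+ M = 0).
Proof. by split=> [|x y hx hy]; rewrite ?mul0rn // mulrnBl hx hy subrr. Qed.

Lemma mulrn_modn (G : zmodType) (M : nat) (x : G) n :
  x *+ M = 0 -> x *+ n = x *+ (n %% M).
Proof. by move=> hx; rewrite {1}(divn_eq n M) mulrnDr mulnC mulrnA hx mul0rn add0r. Qed.

Section TorsionSpan.
Variables (G : zmodType) (M : nat) (S : G -> Prop).
Hypotheses (hM : (1 < M)%N) (hS : subgroup S) (S_tor : forall x, S x -> x *+ M = 0).

(* All sums [\sum_i l_i *+ n_i] with [n_i < M]. *)
Definition torsion_span (l : seq G) : seq G :=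
  foldr (fun x acc => [seq y + x *+ i | y <- acc, i <- iota 0 M]) [:: 0] l.

Lemma torsion_span_cons x l z : z \in torsion_span (x :: l) <->
  exists y i, [/\ y \in torsion_span l, (i < M)%N & z = y + x *+ i].
Proof.
split=> [/allpairsP [[y i] /= [hy hi ->]]|[y [i [hy hi ->]]]].
  by exists y, i; split; rewrite // mem_iota add0n in hi.
by apply/allpairsP; exists (y, i); rewrite /= mem_iota add0n.
Qed.

Lemma torsion_spanP l : (forall x, x \in l -> S x) ->
  [/\ subgroup (fun z => z \in torsion_span l),
      (forall z, z \in torsion_span l -> S z) & {subset l <= torsion_span l}].
Proof.
elim: l => [|x l IH] hl.
  split=> // [|z /[!inE] /eqP -> //]; last exact: subgroup0.
  by split=> [|a b]; rewrite ?inE // => /eqP -> /eqP ->; rewrite subrr.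
have Sx : S x by apply/hl/mem_head.
have [[span0 spanB] spanS span_sub] := IH (fun y hy => hl y (mem_behead (s := x :: l) hy)).
split.
- split=> [|a b]; first by apply/torsion_span_cons; exists 0, 0%N; rewrite mulr0n addr0 ltnW.
  move=> /torsion_span_cons [y [i [hy hi ->]]] /torsion_span_cons [y' [i' [hy' hi' ->]]].
  apply/torsion_span_cons; exists (y - y'), ((i + (M - i')) %% M)%N; split.
  + exact: spanB.
  + by rewrite ltn_mod ltnW.
  + rewrite -mulrn_modn ?S_tor // mulrnDr.
    have -> : x *+ (M - i') = - (x *+ i').
      by apply/eqP; rewrite -addr_eq0 -mulrnDr subnK ?S_tor // ltnW.
    by rewrite opprD addrACA.
- move=> z /torsion_span_cons [y [i [hy hi ->]]].
  by apply: subgroupD (spanS _ hy) (subgroupMn hS _ Sx).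
- move=> z /[!inE] /predU1P [->|hz]; apply/torsion_span_cons.
    by exists 0, 1%N; rewrite add0r.
  by exists z, 0%N; rewrite addr0 span_sub // ltnW.
Qed.

End TorsionSpan.

Section SeqSubgroup.
Variables (G : zmodType) (A : seq G) (hA : subgroup (fun x => x \in A)).

Definition seq_subgroup of subgroup (fun x => x \in A) := seq_sub A.
Local Notation H := (seq_subgroup hA).
HB.instance Definition _ := Finite.copy H (seq_sub A).

Let seq_add (x y : H) : H := SeqSub (subgroupD hA (ssvalP x) (ssvalP y)).
Let seq_opp (x : H) : H := SeqSub (subgroupN hA (ssvalP x)).
Let seq_zero : H := SeqSub (subgroup0 hA).
Let seq_addA : associative seq_add. Proof. by move=> x y z; apply/val_inj/addrA. Qed.
Let seq_addC : commutative seq_add. Proof. by move=> x y; apply/val_inj/addrC. Qed.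
Let seq_add0 : left_id seq_zero seq_add. Proof. by move=> x; apply/val_inj/add0r. Qed.
Let seq_addN : left_inverse seq_zero seq_opp seq_add.
Proof. by move=> x; apply/val_inj/addNr. Qed.
HB.instance Definition _ := GRing.isZmodule.Build H seq_addA seq_addC seq_add0 seq_addN.

Lemma val_seq_subgroupMn (x : H) n : val (x *+ n) = val x *+ n.
Proof. by elim: n => [|n IH] //; rewrite !mulrS /= IH. Qed.

Lemma seq_subgroup_exponent M :
  (forall a, a \in A -> a *+ M = 0) -> exponent_cond H M.
Proof. by move=> A_tor _ x; apply/val_inj; rewrite val_seq_subgroupMn A_tor ?ssvalP. Qed.

End SeqSubgroup.

Definition fin_prod (A B : finZmodType) := (A * B)%type.
HB.instance Definition _ (A B : finZmodType) := GRing.Zmodule.copy (fin_prod A B) (A * B)%type.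
HB.instance Definition _ (A B : finZmodType) := Finite.copy (fin_prod A B) (A * B)%type.

Lemma fin_prod_exponent (A B : finZmodType) M :
  exponent_cond A M -> exponent_cond B M -> exponent_cond (fin_prod A B) M.
Proof. by move=> expA expB M0 [a b]; rewrite pairMnE expA // expB. Qed.

Section Amalgam.
Variables (G G' : zmodType) (p : G -> R) (p' : G' -> R).
Hypotheses (hp : is_value p) (hp' : is_value p').
Variables (A : seq G) (f : G -> G') (delta cap : R).
Hypotheses (hA : subgroup (fun x => x \in A)) (f_add : additive_on (fun x => x \in A) f).
Hypotheses (delta_gt0 : 0 < delta) (cap_gt0 : 0 < cap).
Hypothesis f_approx : forall a, a \in A -> `|p' (f a) - p a| <= delta.

Let f0 : f 0 = 0. Proof. by apply: (additive0 hA f_add). Qed.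

Definition amalgam_path (u : G) (v : G') (x : G) :=
  p (u - x) + p' (v + f x) + (if x == 0 then 0 else delta).

(* The length of (u, v) in the amalgam of G and G' glued along f: a path from
   u to x in G, then a jump to f x costing delta (free when x = 0), then from
   -f x to v in G'; truncated at cap. *)
Definition amalgam (u : G) (v : G') : R :=
  \big[Num.min/cap]_(x <- A) amalgam_path u v x.

Lemma amalgam_path_ge0 u v x : 0 <= amalgam_path u v x.
Proof.
rewrite /amalgam_path; have := value_ge0 hp (u - x); have := value_ge0 hp' (v + f x).
by have := delta_gt0; case: (x == 0); lra.
Qed.

Lemma amalgam_ge0 u v : 0 <= amalgam u v.
Proof. by apply: le_bigmin => [|x _]; rewrite ?amalgam_path_ge0 ?ltW. Qed.

Lemma amalgam_le_cap u v : amalgam u v <= cap.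
Proof. exact: bigmin_le_id. Qed.

Lemma amalgam_le_path u v x : x \in A -> amalgam u v <= amalgam_path u v x.
Proof. by move=> Ax; apply: ge_bigmin_seq. Qed.

Lemma amalgam_cases u v :
  amalgam u v = cap \/ exists2 x, x \in A & amalgam u v = amalgam_path u v x.
Proof. exact: bigmin_mem. Qed.

Lemma amalgam_path0 u v : amalgam_path u v 0 = p u + p' v.
Proof. by rewrite /amalgam_path eqxx subr0 f0 !addr0. Qed.

Lemma amalgam00 : amalgam 0 0 = 0.
Proof.
apply/le_anti; rewrite amalgam_ge0 andbT.
apply: le_trans (amalgam_le_path _ _ (subgroup0 hA)) _.
by rewrite amalgam_path0 (value0 hp) (value0 hp') addr0.
Qed.

Lemma amalgam_eq0 u v : amalgam u v = 0 -> u = 0 /\ v = 0.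
Proof.
case: (amalgam_cases u v) => [->|[x Ax ->]]; first by move=> cap0; exfalso; have := cap_gt0; lra.
have := value_ge0 hp (u - x); have := value_ge0 hp' (v + f x).
rewrite /amalgam_path; case: (eqVneq x 0) => [->|nx]; last by move=> *; exfalso; have := delta_gt0; lra.
rewrite subr0 f0 addr0 addr0 => h1 h2 h0.
have u0 : p (u - 0) <= 0 by rewrite subr0; lra.
have v0 : p' (v - 0) <= 0 by rewrite subr0; lra.
by split; [apply: (value_le0_eq hp u0) | apply: (value_le0_eq hp' v0)].
Qed.

Lemma amalgamN_le u v : amalgam (- u) (- v) <= amalgam u v.
Proof.
case: (amalgam_cases u v) => [->|[x Ax ->]]; first exact: amalgam_le_cap.
apply: le_trans (amalgam_le_path _ _ (subgroupN hA Ax)) _.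
by rewrite /amalgam_path (additiveN hA f_add Ax) oppr_eq0 -!opprD !valueN.
Qed.

Lemma amalgamN u v : amalgam (- u) (- v) = amalgam u v.
Proof. by apply/le_anti; rewrite amalgamN_le /=; have := amalgamN_le (- u) (- v); rewrite !opprK. Qed.

Lemma amalgamD u1 v1 u2 v2 :
  amalgam (u1 + u2) (v1 + v2) <= amalgam u1 v1 + amalgam u2 v2.
Proof.
have := amalgam_le_cap (u1 + u2) (v1 + v2).
case: (amalgam_cases u1 v1) => [->|[x1 Ax1 ->]].
  by have := amalgam_ge0 u2 v2; lra.
case: (amalgam_cases u2 v2) => [->|[x2 Ax2 ->]].
  by have := amalgam_path_ge0 u1 v1 x1; lra.
move=> _; apply: le_trans (amalgam_le_path _ _ (subgroupD hA Ax1 Ax2)) _.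
rewrite /amalgam_path f_add // opprD addrACA [v1 + _ + _]addrACA.
have := valueD hp (u1 - x1) (u2 - x2); have := valueD hp' (v1 + f x1) (v2 + f x2).
have := delta_gt0.
case: (eqVneq x1 0) => [->|_]; case: (eqVneq x2 0) => [->|_];
  rewrite ?add0r ?addr0 ?eqxx //=; try (case: (_ == 0)); lra.
Qed.

Lemma amalgam_left u : u \in A -> p u <= cap -> amalgam u 0 = p u.
Proof.
move=> Au pu_cap; apply/le_anti/andP; split.
  by apply: le_trans (amalgam_le_path _ _ (subgroup0 hA)) _; rewrite amalgam_path0 value0 // addr0.
rewrite /amalgam big_seq; apply: le_bigmin => // x Ax; rewrite /amalgam_path add0r.
case: (eqVneq x 0) => [->|_]; first by rewrite subr0 f0 value0 // !addr0.
have := valueD hp (u - x) x; rewrite subrK.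
by have /ler_distlCBl := f_approx Ax; lra.
Qed.

Lemma amalgam_right v : p' v <= cap -> amalgam 0 v = p' v.
Proof.
move=> pv_cap; apply/le_anti/andP; split.
  by apply: le_trans (amalgam_le_path _ _ (subgroup0 hA)) _; rewrite amalgam_path0 value0 // add0r.
rewrite /amalgam big_seq; apply: le_bigmin => // x Ax; rewrite /amalgam_path sub0r valueN //.
case: (eqVneq x 0) => [->|_]; first by rewrite f0 value0 // !addr0 add0r.
have := valueB hp' (v + f x) (f x); rewrite addrK.
by have /ler_distlDr := f_approx Ax; lra.
Qed.

Lemma amalgam_glue a : a \in A -> amalgam (- a) (f a) <= delta.
Proof.
move=> Aa; apply: le_trans (amalgam_le_path _ _ (subgroupN hA Aa)) _.
rewrite /amalgam_path (additiveN hA f_add Aa) !subrr value0 // value0 // !add0r.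
by have := delta_gt0; case: (_ == 0); lra.
Qed.

Variables (C : seq G') (hC : subgroup (fun x => x \in C)).

Definition amalgam_fin (h : fin_prod (seq_subgroup hA) (seq_subgroup hC)) :=
  amalgam (val h.1) (val h.2).

Lemma amalgam_fin_left u :
  (forall a, a \in A -> p a <= cap) -> amalgam_fin (u, 0) = p (val u).
Proof. by move=> capA; rewrite /amalgam_fin amalgam_left ?capA ?ssvalP. Qed.

Lemma amalgam_fin_right v : p' (val v) <= cap -> amalgam_fin (0, v) = p' (val v).
Proof. exact: amalgam_right. Qed.

Lemma amalgam_fin_value : is_value amalgam_fin.
Proof.
split=> [h|[u v]|[u v]|[u1 v1] [u2 v2]]; rewrite /amalgam_fin /=.
- exact: amalgam_ge0.
- split=> [/amalgam_eq0 [u0 v0]|[-> ->]]; last exact: amalgam00.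
  by congr pair; apply: val_inj.
- exact: amalgamN.
- exact: amalgamD.
Qed.

End Amalgam.

Definition cauchy_seq (G : zmodType) (p : G -> R) (u : nat -> G) :=
  forall eps, 0 < eps -> exists M, forall m n, (M <= m)%N -> (M <= n)%N -> p (u m - u n) < eps.

Definition converges_to (G : zmodType) (p : G -> R) (u : nat -> G) (l : G) :=
  forall eps, 0 < eps -> exists M, forall n, (M <= n)%N -> p (u n - l) < eps.

Record GG_on (r : option R) (M : nat) (G : zmodType) (p : G -> R) (S : G -> Prop) : Prop := {
  GG_value : is_value p;
  GG_subgroup : subgroup S;
  GG_torsion : forall x, S x -> x *+ M = 0;
  GG_bounded : forall x, bounded_by r (p x);
  GG_separable : exists d : nat -> G, (forall n, S (d n)) /\
      (forall x, S x -> forall eps, 0 < eps -> exists n, p (x - d n) < eps);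
  GG_complete : forall u, (forall n, S (u n)) -> cauchy_seq p u ->
      exists2 l, S l & converges_to p u l;
  GG_extension : forall (H : finZmodType) (q : H -> R), is_value q -> exponent_cond H M ->
     (forall x, bounded_by r (q x)) ->
     forall K : {set H}, 0 \in K -> (forall x y, x \in K -> y \in K -> x - y \in K) ->
     forall phi : H -> G,
       (forall x y, x \in K -> y \in K -> phi (x + y) = phi x + phi y) ->
       (forall x y, x \in K -> y \in K -> p (phi x - phi y) = q (x - y)) ->
     forall eps : R, 0 < eps < 1 ->
     exists phi_e : H -> G,
       [/\ (forall x y, phi_e (x + y) = phi_e x + phi_e y), (forall x, S (phi_e x)),
           (forall x, x \in K -> p (phi x - phi_e x) <= eps) &
           (forall x, (1 - eps) * q x <= p (phi_e x) /\ p (phi_e x) <= (1 + eps) * q x)]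
}.

Lemma exists_cap (r : option R) (hr : r = Some 1 \/ r = None)
    (G G' : zmodType) (p : G -> R) (p' : G' -> R) (A : seq G) (C : seq G') :
  (forall x, bounded_by r (p x)) -> (forall y, bounded_by r (p' y)) ->
  exists cap, [/\ 0 < cap, forall y, y <= cap -> bounded_by r y,
                  forall a, a \in A -> p a <= cap & forall c, c \in C -> p' c <= cap].
Proof.
case: hr => -> pb p'b; first by exists 1; split=> // [a|c] _; [apply: pb | apply: p'b].
have [bA bA0 hbA] := seq_ub A p; have [bC bC0 hbC] := seq_ub C p'.
exists (1 + bA + bC); split=> // [|a /hbA|c /hbC]; lra.
Qed.

Lemma small_scale (eps cap : R) : 0 < eps -> 0 < cap ->
  exists e, [/\ 0 < e < 1, e <= eps & forall y, 0 <= y -> y <= cap -> e * y <= eps].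
Proof.
move=> eps_gt0 cap_gt0; exists (Num.min (1 / 2) (eps / (cap + 1))).
have e_half : Num.min (1 / 2) (eps / (cap + 1)) <= 1 / 2 by rewrite ge_min lexx.
have e_gt0 : 0 < Num.min (1 / 2) (eps / (cap + 1)).
  by rewrite lt_min; apply/andP; split; [lra | apply: divr_gt0; lra].
have e_cap : Num.min (1 / 2) (eps / (cap + 1)) * (cap + 1) <= eps.
  apply: le_trans (_ : eps / (cap + 1) * (cap + 1) <= eps); last by rewrite divfK ?gt_eqF //; lra.
  by rewrite ler_wpM2r ?ge_min ?lexx ?orbT //; lra.
by split=> [||y y_ge0 y_cap]; [apply/andP; split; lra | nra | nra].
Qed.

Section Extension.
Variables (r : option R) (hr : r = Some 1 \/ r = None) (M : nat).
Variables (G : zmodType) (p : G -> R) (S : G -> Prop) (X : GG_on r M p S).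
Variables (G' : zmodType) (p' : G' -> R) (T : G' -> Prop) (Y : GG_on r M p' T).

Section Step.
Variables (A : seq G) (C : seq G') (hA : subgroup (fun a => a \in A)) (hC : subgroup (fun c => c \in C)).
Hypotheses (AS : forall a, a \in A -> S a) (CT : forall c, c \in C -> T c).
Variables (f : G -> G') (delta : R).
Hypotheses (f_add : additive_on (fun a => a \in A) f) (fAC : forall a, a \in A -> f a \in C).
Hypotheses (delta_gt0 : 0 < delta) (f_approx : forall a, a \in A -> `|p' (f a) - p a| <= delta).

Let H := fin_prod (seq_subgroup hA) (seq_subgroup hC).

Lemma amalgam_extension cap e : 0 < cap -> (forall y, y <= cap -> bounded_by r y) ->
  (forall a, a \in A -> p a <= cap) -> 0 < e < 1 ->
  let q : H -> R := @amalgam_fin _ _ p p' A f delta cap hA C hC in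
  exists psi : H -> G,
  [/\ (forall x y, psi (x + y) = psi x + psi y), (forall h, S (psi h)),
      (forall u, p (val u - psi (u, 0)) <= e) &
      (forall h, (1 - e) * q h <= p (psi h) /\ p (psi h) <= (1 + e) * q h)].
Proof.
move=> cap_gt0 cap_bd capA e01 q; have hp := GG_value X; have hp' := GG_value Y.
pose K : {set H} := [set h : H | h.2 == 0].
have K0 : 0 \in K by rewrite inE.
have KB x y : x \in K -> y \in K -> x - y \in K.
  by rewrite !inE /= => /eqP -> /eqP ->; rewrite subrr.
have phi_iso (x y : H) : x \in K -> y \in K -> p (val x.1 - val y.1) = q (x - y).
  case: x y => [x1 x2] [y1 y2]; rewrite !inE /= => /eqP -> /eqP ->.
  have -> : (x1, 0) - (y1, 0) = (x1 - y1, 0) :> H by congr pair; rewrite subrr.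
  by rewrite /q amalgam_fin_left.
have q_exp : exponent_cond H M.
  by apply: fin_prod_exponent; apply: seq_subgroup_exponent => ? ?;
    [apply/(GG_torsion X)/AS | apply/(GG_torsion Y)/CT].
have [psi [psi_add psiS psi_close psi_iso]] :=
  GG_extension X (amalgam_fin_value hp hp' hA f_add delta_gt0 cap_gt0 hC) q_exp
    (fun h => cap_bd _ (amalgam_le_cap p p' A f delta cap _ _))
    (phi := fun h => val h.1) K0 KB (fun _ _ _ _ => erefl) phi_iso e01.
by exists psi; split=> // u; apply: (psi_close (u, 0)); rewrite inE.
Qed.

(* The C-part of the embedding almost inverts f. *)
Lemma extension_step eps : 0 < eps ->
  exists g : G' -> G, [/\ additive_on (fun c => c \in C) g, (forall c, c \in C -> S (g c)),
     (forall c, c \in C -> `|p (g c) - p' c| <= eps) &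
     (forall a, a \in A -> p (g (f a) - a) <= 2 * delta + eps)].
Proof.
move=> eps_gt0; have hp := GG_value X; have hp' := GG_value Y.
have [cap [cap_gt0 cap_bd capA capC]] := exists_cap hr A C (GG_bounded X) (GG_bounded Y).
have [e [e01 e_eps e_cap]] := small_scale eps_gt0 cap_gt0.
have [psi [psi_add psiS psi_close psi_iso]] := amalgam_extension cap_gt0 cap_bd capA e01.
pose q := @amalgam_fin _ _ p p' A f delta cap hA C hC.
pose iA a : seq_subgroup hA := insubd (0 : seq_subgroup hA) a.
pose iC c : seq_subgroup hC := insubd (0 : seq_subgroup hC) c.
have iAK a : a \in A -> val (iA a) = a by move=> Aa; rewrite insubdK.
have iCK c : c \in C -> val (iC c) = c by move=> Cc; rewrite insubdK.
exists (fun c => psi (0, iC c)); split.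
- move=> c c' Cc Cc'; rewrite -psi_add; congr psi; congr pair; first by rewrite addr0.
  by apply: val_inj; rewrite /= !iCK //; apply: (subgroupD hC).
- by move=> c _; apply: psiS.
- move=> c Cc; have [lo hi] := psi_iso (0, iC c).
  have capc : p' (val (iC c)) <= cap by rewrite iCK ?capC.
  rewrite /q amalgam_fin_right // iCK // in lo hi.
  have := e_cap _ (value_ge0 hp' c) (capC _ Cc).
  by move=> small; rewrite ler_distl; apply/andP; split; nra.
- move=> a Aa.
  have -> : ((0 : seq_subgroup hA), iC (f a)) = (- iA a, iC (f a)) + (iA a, 0).
    by congr pair; rewrite ?addNr ?addr0.
  rewrite psi_add -addrA; apply: le_trans (valueD hp _ _) _.
  have [_ hi] := psi_iso (- iA a, iC (f a)).
  have glue := amalgam_glue hp hp' cap hA f_add delta_gt0 Aa.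
  rewrite /q /amalgam_fin /= iCK ?fAC // iAK // in hi.
  have := psi_close (iA a); rewrite iAK // value_distC // => close.
  have : 0 <= amalgam p p' A f delta cap (- a) (f a) by apply: amalgam_ge0.
  have := value_ge0 hp' (f a); nra.
Qed.

End Step.

End Extension.

Section BackAndForth.
Variables (G G' : zmodType) (p : G -> R) (p' : G' -> R) (S : G -> Prop) (T : G' -> Prop).
Variables (A : nat -> seq G) (f : nat -> G -> G') (B : nat -> seq G') (h : nat -> G' -> G).

(* A_0 -f_0-> B_0 -h_0-> A_1 -f_1-> B_1 -> ...: nested finite subgroups exhausting
   dense parts of S and T, joined by maps that are almost isometric and almost
   inverse to each other, with errors tol k at stage k. *)
Record back_and_forth : Prop := BackAndForth {
  bf_A : forall k, subgroup (fun a => a \in A k);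
  bf_AS : forall k a, a \in A k -> S a;
  bf_B : forall k, subgroup (fun b => b \in B k);
  bf_BT : forall k b, b \in B k -> T b;
  bf_A_nest : forall k, {subset A k <= A k.+1};
  bf_B_nest : forall k, {subset B k <= B k.+1};
  bf_f_add : forall k, additive_on (fun a => a \in A k) (f k);
  bf_fAB : forall k a, a \in A k -> f k a \in B k;
  bf_f_approx : forall k a, a \in A k -> `|p' (f k a) - p a| <= tol k;
  bf_h_add : forall k, additive_on (fun b => b \in B k) (h k);
  bf_hBA : forall k b, b \in B k -> h k b \in A k.+1;
  bf_h_approx : forall k b, b \in B k -> `|p (h k b) - p' b| <= tol k;
  bf_hf : forall k a, a \in A k -> p (h k (f k a) - a) <= 3 * tol k;
  bf_fh : forall k b, b \in B k -> p' (f k.+1 (h k b) - b) <= 3 * tol k;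
  bf_A_dense : forall x, S x -> forall e, 0 < e -> exists k, exists2 a, a \in A k & p (x - a) < e;
  bf_B_dense : forall y, T y -> forall e, 0 < e -> exists k, exists2 b, b \in B k & p' (y - b) < e
}.

End BackAndForth.

Arguments bf_f_add {G G' p p' S T A f B h} _ k.

Lemma back_and_forth_shift (G G' : zmodType) (p : G -> R) (p' : G' -> R)
    (S : G -> Prop) (T : G' -> Prop) A f B h :
  back_and_forth p p' S T A f B h ->
  back_and_forth p' p T S B h (fun k => A k.+1) (fun k => f k.+1).
Proof.
case=> hA AS hB BT A_nest B_nest f_add fAB f_approx h_add hBA h_approx hf fh A_dense B_dense.
split=> // [k|k|k a Aa|k a Aa|x Sx e e_gt0].
- exact: AS.
- exact: fAB.
- by apply: le_trans (f_approx _ _ Aa) _; apply/tol_le/leqnSn.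
- by apply: le_trans (hf _ _ Aa) _; have := tol_le (leqnSn k); lra.
- by have [k [a Aa xa]] := A_dense x Sx e e_gt0; exists k, a => //; apply: A_nest.
Qed.

Section Limit.
Variables (G G' : zmodType) (p : G -> R) (p' : G' -> R) (S : G -> Prop) (T : G' -> Prop).
Hypotheses (hp : is_value p) (hp' : is_value p') (hS : subgroup S).
Hypothesis T_complete : forall u, (forall n, T (u n)) -> cauchy_seq p' u ->
  exists2 l, T l & converges_to p' u l.
Variables (A : nat -> seq G) (f : nat -> G -> G') (B : nat -> seq G') (h : nat -> G' -> G).
Hypothesis bf : back_and_forth p p' S T A f B h.

Lemma bf_A_mono k m a : a \in A k -> (k <= m)%N -> a \in A m.
Proof.
move=> Aa; elim: m => [|m IH]; first by rewrite leqn0 => /eqP <-.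
by rewrite leq_eqVlt => /predU1P [<- //|/IH /(bf_A_nest bf)].
Qed.

Lemma f_driftS m a : a \in A m -> p' (f m.+1 a - f m a) <= 7 * tol m.
Proof.
move=> Aa; have Bfa := bf_fAB bf Aa; have Ahfa := bf_hBA bf Bfa.
have Aa1 := bf_A_nest bf Aa.
have -> : f m.+1 a - f m a = f m.+1 (a - h m (f m a)) + (f m.+1 (h m (f m a)) - f m a).
  by rewrite (additiveB (bf_A bf m.+1) (bf_f_add bf m.+1)) // addrA subrK.
apply: le_trans (valueD hp' _ _) _.
have Ad : a - h m (f m a) \in A m.+1 by apply: (subgroupB (bf_A bf m.+1)).
have := ler_distlDr (bf_f_approx bf Ad).
have := bf_hf bf Aa; rewrite value_distC //.
have := bf_fh bf Bfa; rewrite tolS; have := tol_gt0 m; lra.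
Qed.

Lemma f_drift k m a : a \in A k -> (k <= m)%N -> p' (f m a - f k a) <= 14 * tol k.
Proof.
move=> Aa; suff: (k <= m)%N -> p' (f m a - f k a) <= 14 * (tol k - tol m).
  by move=> H km; have := H km; have := tol_gt0 m; lra.
elim: m => [|m IH]; first by rewrite leqn0 => /eqP <-; rewrite subrr value0 // subrr mulr0.
rewrite leq_eqVlt => /predU1P [<-|]; first by rewrite subrr value0 // subrr mulr0.
rewrite ltnS => km; apply: le_trans (value_dist_triangle hp' _ (f m a) _) _.
have := f_driftS (bf_A_mono Aa km); have := IH km; rewrite tolS; lra.
Qed.

Lemma f_almost_iso k l a b : a \in A k -> b \in A l ->
  `|p' (f k a - f l b) - p (a - b)| <= 15 * (tol k + tol l).
Proof.
move=> Aa Ab; pose m := maxn k l.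
have km : (k <= m)%N := leq_maxl k l; have lm : (l <= m)%N := leq_maxr k l.
have Aam := bf_A_mono Aa km; have Abm := bf_A_mono Ab lm.
have := bf_f_approx bf (subgroupB (bf_A bf m) Aam Abm).
rewrite (additiveB (bf_A bf m) (bf_f_add bf m)) // ler_distl => /andP [lo hi].
have := f_drift Aa km; have := f_drift Ab lm; have := tol_le km.
have := value_lipschitz hp' (f k a - f l b) (f m a - f m b); rewrite ler_distl => /andP [lo' hi'].
have := value_dist_sub hp' (f k a) (f l b) (f m a) (f m b).
rewrite (value_distC hp' (f k a)) (value_distC hp' (f l b)).
have := tol_gt0 l; move=> *; rewrite ler_distl; apply/andP; split; lra.
Qed.

Lemma f_almost_addB k l n a b c : a \in A k -> b \in A l -> c \in A n ->
  p' (f k a + f l b - f n c) <= p (a + b - c) + 15 * (tol k + tol l + tol n).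
Proof.
move=> Aa Ab Ac; pose m := maxn k (maxn l n).
have km : (k <= m)%N by apply: leq_maxl.
have lm : (l <= m)%N by rewrite (leq_trans (leq_maxl l n)) // leq_maxr.
have nm : (n <= m)%N by rewrite (leq_trans (leq_maxr l n)) // leq_maxr.
have Aam := bf_A_mono Aa km; have Abm := bf_A_mono Ab lm; have Acm := bf_A_mono Ac nm.
have hAm := bf_A bf m; have f_addm := bf_f_add bf m.
have Aabc : a + b - c \in A m by apply: (subgroupB hAm) => //; apply: (subgroupD hAm).
have := ler_distlDr (bf_f_approx bf Aabc).
rewrite (additiveB hAm f_addm) //; last by apply: (subgroupD hAm).
rewrite f_addm //.
have := f_drift Aa km; have := f_drift Ab lm; have := f_drift Ac nm; have := tol_le km.
have := value_dist_addB hp' (f k a) (f l b) (f n c) (f m a) (f m b) (f m c).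
rewrite (value_distC hp' (f k a)) (value_distC hp' (f l b)) (value_distC hp' (f n c)).
have := tol_gt0 l; have := tol_gt0 n; lra.
Qed.

(* [approx x j] is a stage k >= j with a point a of A_k that is tol j-close to
   x; the limit of f_k a as j grows defines the isometry on S. *)
Section Approximants.
Variable approx : G -> nat -> nat * G.
Hypothesis approxP : forall x j, S x ->
  [/\ (j <= (approx x j).1)%N, (approx x j).2 \in A (approx x j).1 & p (x - (approx x j).2) < tol j].

Let u x j := f (approx x j).1 (approx x j).2.

Lemma approx_T x j : S x -> T (u x j).
Proof. by case/(approxP j) => _ Aa _; apply/(bf_BT bf)/(bf_fAB bf Aa). Qed.

Lemma approx_dist x y i j : S x -> S y ->
  `|p' (u x i - u y j) - p (x - y)| <= 16 * (tol i + tol j).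
Proof.
move=> Sx Sy; have [ji Ax close_x] := approxP i Sx; have [jj Ay close_y] := approxP j Sy.
have E := f_almost_iso Ax Ay.
have := tol_le ji; have := tol_le jj.
have L := value_lipschitz hp ((approx x i).2 - (approx y j).2) (x - y).
have Q := value_dist_sub hp (approx x i).2 (approx y j).2 x y.
rewrite (value_distC hp (approx x i).2) (value_distC hp (approx y j).2) in Q.
move: E L; rewrite /u !ler_distl => /andP [E1 E2] /andP [L1 L2] *.
apply/andP; split; lra.
Qed.

Lemma approx_addB x y z i : S x -> S y -> S z ->
  p' (u x i + u y i - u z i) <= p (x + y - z) + 48 * tol i.
Proof.
move=> Sx Sy Sz.
have [jx Ax cx] := approxP i Sx; have [jy Ay cy] := approxP i Sy.
have [jz Az cz] := approxP i Sz.
have := f_almost_addB Ax Ay Az.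
have := tol_le jx; have := tol_le jy; have := tol_le jz.
have := value_dist_addB hp (approx x i).2 (approx y i).2 (approx z i).2 x y z.
rewrite (value_distC hp (approx x i).2) (value_distC hp (approx y i).2).
rewrite (value_distC hp (approx z i).2) /u; lra.
Qed.

Lemma approx_cauchy x : S x -> cauchy_seq p' (u x).
Proof.
move=> Sx e e_gt0; have [N hN] := tol_small (divr_gt0 e_gt0 (ltr0n R 32)).
exists N => m n Nm Nn.
have := approx_dist m n Sx Sx; rewrite subrr value0 // subr0 ger0_norm ?value_ge0 //.
have := tol_le Nm; have := tol_le Nn; lra.
Qed.

Variable Phi : G -> G'.
Hypothesis PhiP : forall x, S x -> converges_to p' (u x) (Phi x).

Lemma common_index x y z e : S x -> S y -> S z -> 0 < e -> exists j,
  [/\ tol j < e, p' (u x j - Phi x) < e, p' (u y j - Phi y) < e & p' (u z j - Phi z) < e].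
Proof.
move=> Sx Sy Sz e_gt0; have [N hN] := tol_small e_gt0.
have [Mx hx] := PhiP Sx e_gt0; have [My hy] := PhiP Sy e_gt0; have [Mz hz] := PhiP Sz e_gt0.
exists (maxn N (maxn Mx (maxn My Mz))); split.
- by apply: le_lt_trans hN; apply/tol_le/leq_maxl.
- by apply: hx; lia.
- by apply: hy; lia.
- by apply: hz; lia.
Qed.

Lemma limit_iso x y : S x -> S y -> p' (Phi x - Phi y) = p (x - y).
Proof.
move=> Sx Sy; apply/le_anti/andP; split; apply: (@ler_addgt0_scaled _ _ _ 40) => // e e_gt0;
  have [j [ej ex ey _]] := common_index Sx Sy Sx e_gt0;
  have := approx_dist j j Sx Sy; rewrite ler_distl => /andP [lo hi].
- have := value_dist_sub hp' (Phi x) (Phi y) (u x j) (u y j).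
  rewrite (value_distC hp' (Phi x)) (value_distC hp' (Phi y)).
  have := value_subr_le hp' (Phi x - Phi y) (u x j - u y j); lra.
- have := value_dist_sub hp' (u x j) (u y j) (Phi x) (Phi y).
  have := value_subr_le hp' (u x j - u y j) (Phi x - Phi y); lra.
Qed.

Lemma limit_add x y : S x -> S y -> Phi (x + y) = Phi x + Phi y.
Proof.
move=> Sx Sy; have Sxy := subgroupD hS Sx Sy; symmetry; apply: (value_le0_eq hp').
apply: (@ler_addgt0_scaled _ _ _ 60) => // e e_gt0.
have [j [ej ex ey exy]] := common_index Sx Sy Sxy e_gt0.
have := value_dist_addB hp' (Phi x) (Phi y) (Phi (x + y)) (u x j) (u y j) (u (x + y) j).
rewrite (value_distC hp' (Phi x)) (value_distC hp' (Phi y)) (value_distC hp' (Phi (x + y))).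
have := approx_addB j Sx Sy Sxy; rewrite subrr value0 //; lra.
Qed.

Lemma limit_f_close k a : a \in A k -> p' (Phi a - f k a) <= 16 * tol k.
Proof.
move=> Aa; have Sa := bf_AS bf Aa.
apply: (@ler_addgt0_scaled _ _ _ 20) => // e e_gt0.
have [j [ej ea _ _]] := common_index Sa Sa Sa e_gt0.
have [jj Aj cj] := approxP j Sa.
have := ler_distlDr (f_almost_iso Aj Aa); rewrite value_distC // in cj.
have := tol_le jj; have := tol_gt0 k.
have := value_dist_triangle hp' (Phi a) (u a j) (f k a).
rewrite value_distC // in ea; rewrite /u in ea *; lra.
Qed.

End Approximants.

Lemma limit_exists : exists Phi : G -> G',
  [/\ (forall x, S x -> T (Phi x)), additive_on S Phi,
      (forall x, S x -> p' (Phi x) = p x) &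
      (forall k a, a \in A k -> p' (Phi a - f k a) <= 16 * tol k)].
Proof.
pose good_approx x j (c : nat * G) :=
  [/\ (j <= c.1)%N, c.2 \in A c.1 & p (x - c.2) < tol j].
have [approx approxP] : exists approx : G -> nat -> nat * G,
    forall x j, S x -> good_approx x j (approx x j).
  apply: (choice (fun x g => forall j, S x -> good_approx x j (g j))) => x.
  apply: (choice (fun j c => S x -> good_approx x j c)) => j.
  case: (classic (S x)) => [Sx|]; last by exists (0%N, 0).
  have [k [a Aa xa]] := bf_A_dense bf Sx (tol_gt0 j).
  by exists (maxn k j, a) => _; split=> //=; [exact: leq_maxr | exact: bf_A_mono Aa (leq_maxl _ _)].
have [Phi PhiP] : exists Phi : G -> G', forall x, S x ->
    T (Phi x) /\ converges_to p' (fun j => f (approx x j).1 (approx x j).2) (Phi x).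
  apply: (choice (fun x l => S x ->
    T l /\ converges_to p' (fun j => f (approx x j).1 (approx x j).2) l)) => x.
  case: (classic (S x)) => [Sx|]; last by exists 0.
  have [l Tl ul] := T_complete (fun n => approx_T approxP n Sx) (approx_cauchy approxP Sx).
  by exists l.
have conv x : S x -> converges_to p' _ (Phi x) := fun Sx => proj2 (PhiP x Sx).
exists Phi; split.
- by move=> x /PhiP [].
- exact: (limit_add approxP conv).
- move=> x Sx; have := limit_iso approxP conv Sx (subgroup0 hS).
  by rewrite (additive0 hS (limit_add approxP conv)) !subr0.
- exact: (limit_f_close approxP conv).
Qed.

End Limit.

Section Inverse.
Variables (G G' : zmodType) (p : G -> R) (p' : G' -> R) (S : G -> Prop) (T : G' -> Prop).
Hypotheses (hp : is_value p) (hS : subgroup S) (hT : subgroup T).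
Variables (A : nat -> seq G) (f : nat -> G -> G') (B : nat -> seq G') (h : nat -> G' -> G).
Hypothesis bf : back_and_forth p p' S T A f B h.
Variables (Phi : G -> G') (Psi : G' -> G).
Hypotheses (PhiT : forall x, S x -> T (Phi x)) (Phi_add : additive_on S Phi)
  (Phi_iso : forall x, S x -> p' (Phi x) = p x)
  (Phi_f : forall k a, a \in A k -> p' (Phi a - f k a) <= 16 * tol k).
Hypotheses (Psi_add : additive_on T Psi) (Psi_iso : forall y, T y -> p (Psi y) = p' y)
  (Psi_h : forall k b, b \in B k -> p (Psi b - h k b) <= 16 * tol k).

Lemma limit_inverse_on_A k a : a \in A k -> Psi (Phi a) = a.
Proof.
move=> Aa; apply: (value_le0_eq hp); apply: (@ler_addgt0_scaled _ _ _ 40) => // e e_gt0.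
have [N hN] := tol_small e_gt0.
pose m := maxn k N.
have Aam : a \in A m := bf_A_mono bf Aa (leq_maxl _ _).
have := tol_le (leq_maxr k N); have := tol_gt0 m.
have Bfa := bf_fAB bf Aam; have Tfa := bf_BT bf Bfa; have TPhia := PhiT (bf_AS bf Aa).
have : p (Psi (Phi a) - Psi (f m a)) <= 16 * tol m.
  rewrite -(additiveB hT Psi_add) // Psi_iso; last exact: (subgroupB hT).
  exact: Phi_f.
have := Psi_h Bfa; have := bf_hf bf Aam.
have := value_dist_triangle hp (Psi (Phi a)) (Psi (f m a)) a.
have := value_dist_triangle hp (Psi (f m a)) (h m (f m a)) a.
lra.
Qed.

Lemma limit_inverse x : S x -> Psi (Phi x) = x.
Proof.
move=> Sx; apply: (value_le0_eq hp); apply: (@ler_addgt0_scaled _ _ _ 4) => // e e_gt0.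
have [k [a Aa xa]] := bf_A_dense bf Sx e_gt0.
have Sa := bf_AS bf Aa; have Sxa := subgroupB hS Sx Sa.
have := value_dist_triangle hp (Psi (Phi x)) (Psi (Phi a)) x.
rewrite -(additiveB hT Psi_add (PhiT Sx) (PhiT Sa)) -(additiveB hS Phi_add Sx Sa).
rewrite (Psi_iso (PhiT Sxa)) (Phi_iso Sxa) (limit_inverse_on_A Aa) (value_distC hp a).
have := value_ge0 hp (x - a); lra.
Qed.

End Inverse.

Lemma nat_dependent_choice (St : Type) (P : nat -> St -> Prop) (Rl : nat -> St -> St -> Prop) :
  (exists s0, P 0%N s0) -> (forall k s, P k s -> exists s', P k.+1 s' /\ Rl k s s') ->
  exists sq : nat -> St, forall k, P k (sq k) /\ Rl k (sq k) (sq k.+1).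
Proof.
move=> [s0 Ps0] next.
have next' k (s : {s | P k s}) : {s' | P k.+1 s' /\ Rl k (proj1_sig s) s'}.
  by case: s => s Ps; apply/constructive_indefinite_description/next.
pose fix build k : {s | P k s} :=
  if k is k'.+1 then exist _ (proj1_sig (next' k' (build k'))) (proj1 (proj2_sig (next' k' _)))
  else exist _ s0 Ps0.
exists (fun k => proj1_sig (build k)) => k; split; first exact: proj2_sig (build k).
exact: proj2 (proj2_sig (next' k (build k))).
Qed.

Section Construction.
Variables (r : option R) (hr : r = Some 1 \/ r = None) (M : nat) (hM : (1 < M)%N).
Variables (G : zmodType) (p : G -> R) (S : G -> Prop) (X : GG_on r M p S).
Variables (G' : zmodType) (p' : G' -> R) (T : G' -> Prop) (Y : GG_on r M p' T).
Variables (d : nat -> G) (e : nat -> G').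

Record stage (k : nat) (A : seq G) (f : G -> G') (B : seq G') (h : G' -> G) : Prop := Stage {
  st_A : subgroup (fun a => a \in A); st_AS : forall a, a \in A -> S a;
  st_B : subgroup (fun b => b \in B); st_BT : forall b, b \in B -> T b;
  st_f_add : additive_on (fun a => a \in A) f; st_fAB : forall a, a \in A -> f a \in B;
  st_f_approx : forall a, a \in A -> `|p' (f a) - p a| <= tol k;
  st_h_add : additive_on (fun b => b \in B) h; st_hS : forall b, b \in B -> S (h b);
  st_h_approx : forall b, b \in B -> `|p (h b) - p' b| <= tol k;
  st_hf : forall a, a \in A -> p (h (f a) - a) <= 3 * tol k;
  st_d : d k \in A; st_e : e k \in B }.

Hypotheses (dS : forall n, S (d n)) (eT : forall n, T (e n)).

(* One round of the back-and-forth: enlarge A by the image of h and the next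
   point of the dense sequence, extend back with f, then B likewise, and extend
   forth with h. *)
Lemma stage_next k A f B h : stage k A f B h ->
  exists A' f' B' h', stage k.+1 A' f' B' h' /\
   [/\ {subset A <= A'}, {subset B <= B'}, (forall b, b \in B -> h b \in A') &
       (forall b, b \in B -> p' (f' (h b) - b) <= 3 * tol k)].
Proof.
case=> hA AS hB BT f_add fAB f_approx h_add hS h_approx hf dA eB.
have lS x : x \in A ++ map h B ++ [:: d k.+1] -> S x.
  by rewrite !mem_cat => /or3P [/AS //|/mapP [b Bb ->]|/[!inE] /eqP ->]; [apply: hS|].
have [hA' A'S A'_sub] := torsion_spanP hM (GG_subgroup X) (GG_torsion X) lS.
set A' := torsion_span M _ in hA' A'S A'_sub.
have hBA' b : b \in B -> h b \in A' by move=> Bb; apply: A'_sub; rewrite !mem_cat map_f ?orbT.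
have [f' [f'_add f'T f'_approx f'h]] :=
  extension_step hr Y X hB hA' BT A'S h_add hBA' (tol_gt0 k) h_approx (tol_gt0 k.+1).
have lT x : x \in B ++ map f' A' ++ [:: e k.+1] -> T x.
  by rewrite !mem_cat => /or3P [/BT //|/mapP [a A'a ->]|/[!inE] /eqP ->]; [apply: f'T|].
have [hB' B'T B'_sub] := torsion_spanP hM (GG_subgroup Y) (GG_torsion Y) lT.
set B' := torsion_span M _ in hB' B'T B'_sub.
have f'AB' a : a \in A' -> f' a \in B' by move=> A'a; apply: B'_sub; rewrite !mem_cat map_f ?orbT.
have [h' [h'_add h'S h'_approx h'f']] :=
  extension_step hr X Y hA' hB' A'S B'T f'_add f'AB' (tol_gt0 k.+1) f'_approx (tol_gt0 k.+1).
exists A', f', B', h'; split; first split=> //.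
- by move=> a A'a; have := h'f' a A'a; lra.
- by apply: A'_sub; rewrite !mem_cat mem_head !orbT.
- by apply: B'_sub; rewrite !mem_cat mem_head !orbT.
- split=> // [a Aa|b Bb|b Bb]; [apply: A'_sub | apply: B'_sub | ]; rewrite ?mem_cat ?Aa ?Bb //.
  by have := f'h b Bb; rewrite tolS; have := tol_gt0 k; lra.
Qed.

Lemma stage_first : exists A f B h, stage 0 A f B h.
Proof.
have hp := GG_value X; have hp' := GG_value Y.
have lS x : x \in [:: d 0%N] -> S x by rewrite inE => /eqP ->.
have [hA0 A0S A0_sub] := torsion_spanP hM (GG_subgroup X) (GG_torsion X) lS.
set A0 := torsion_span M _ in hA0 A0S A0_sub.
have hZ : subgroup (fun c : G' => c \in [:: 0]).
  by split=> [|x y]; rewrite ?inE // => /eqP -> /eqP ->; rewrite subrr.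
have zeroT c : c \in [:: (0 : G')] -> T c.
  by rewrite inE => /eqP ->; apply: (subgroup0 (GG_subgroup Y)).
have zero_approx c : c \in [:: (0 : G')] -> `|p (0 : G) - p' c| <= 1.
  by move=> /[!inE] /eqP ->; rewrite (value0 hp) (value0 hp') subrr normr0 ler01.
(* f_0 comes from extending the zero map on {0} back from A_0. *)
have [f0 [f0_add f0T f0_approx _]] := extension_step hr Y X hZ hA0 zeroT A0S
  (fun x y _ _ => esym (addr0 0)) (fun _ _ => subgroup0 hA0) ltr01 zero_approx (tol_gt0 0).
have lT x : x \in map f0 A0 ++ [:: e 0%N] -> T x.
  by rewrite mem_cat => /orP [/mapP [a A0a ->]|/[!inE] /eqP ->]; [apply: f0T|].
have [hB0 B0T B0_sub] := torsion_spanP hM (GG_subgroup Y) (GG_torsion Y) lT.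
set B0 := torsion_span M _ in hB0 B0T B0_sub.
have f0AB a : a \in A0 -> f0 a \in B0 by move=> A0a; apply: B0_sub; rewrite mem_cat map_f.
have [h0 [h0_add h0S h0_approx h0f]] :=
  extension_step hr X Y hA0 hB0 A0S B0T f0_add f0AB (tol_gt0 0) f0_approx (tol_gt0 0).
exists A0, f0, B0, h0; split=> //.
- by move=> a A0a; have := h0f a A0a; lra.
- by apply: A0_sub; rewrite mem_head.
- by apply: B0_sub; rewrite mem_cat mem_head orbT.
Qed.

Hypotheses (d_dense : forall x, S x -> forall eps, 0 < eps -> exists n, p (x - d n) < eps)
  (e_dense : forall y, T y -> forall eps, 0 < eps -> exists n, p' (y - e n) < eps).

Lemma back_and_forth_exists : exists A f B h, back_and_forth p p' S T A f B h.
Proof.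
pose St := ((seq G * (G -> G')) * (seq G' * (G' -> G)))%type.
pose P k (s : St) := stage k s.1.1 s.1.2 s.2.1 s.2.2.
pose Rl k (s s' : St) := [/\ {subset s.1.1 <= s'.1.1}, {subset s.2.1 <= s'.2.1},
   (forall b, b \in s.2.1 -> s.2.2 b \in s'.1.1) &
   (forall b, b \in s.2.1 -> p' (s'.1.2 (s.2.2 b) - b) <= 3 * tol k)].
have [sq sqP] : exists sq : nat -> St, forall k, P k (sq k) /\ Rl k (sq k) (sq k.+1).
  apply: nat_dependent_choice => [|k [[A f] [B h]] /stage_next [A' [f' [B' [h' [st rel]]]]]].
    by have [A [f [B [h st]]]] := stage_first; exists ((A, f), (B, h)).
  by exists ((A', f'), (B', h')).
exists (fun k => (sq k).1.1), (fun k => (sq k).1.2), (fun k => (sq k).2.1), (fun k => (sq k).2.2).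
split; try by move=> k; case: (sqP k) => [[]].
- by move=> k; case: (sqP k) => _ [].
- by move=> k; case: (sqP k) => _ [].
- by move=> k; case: (sqP k) => _ [].
- by move=> k; case: (sqP k) => _ [].
- move=> x Sx eps eps_gt0; have [n hn] := d_dense Sx eps_gt0.
  by exists n, (d n) => //; case: (sqP n) => [[]].
- move=> y Ty eps eps_gt0; have [n hn] := e_dense Ty eps_gt0.
  by exists n, (e n) => //; case: (sqP n) => [[]].
Qed.

End Construction.

Theorem GG_on_unique (r : option R) (hr : r = Some 1 \/ r = None) (M : nat) (hM : (1 < M)%N)
  (G : zmodType) (p : G -> R) (S : G -> Prop) (X : GG_on r M p S)
  (G' : zmodType) (p' : G' -> R) (T : G' -> Prop) (Y : GG_on r M p' T) :
  exists (Phi : G -> G') (Psi : G' -> G),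
   [/\ (forall x, S x -> T (Phi x)), (forall y, T y -> S (Psi y)),
       additive_on S Phi, additive_on T Psi & (forall x, S x -> p' (Phi x) = p x)] /\
   [/\ (forall y, T y -> p (Psi y) = p' y),
       (forall x, S x -> Psi (Phi x) = x) & (forall y, T y -> Phi (Psi y) = y)].
Proof.
have [d [dS d_dense]] := GG_separable X; have [e [eT e_dense]] := GG_separable Y.
have [A [f [B [h bf]]]] := back_and_forth_exists hr hM X Y dS eT d_dense e_dense.
have [Phi [PhiT Phi_add Phi_iso Phi_f]] :=
  limit_exists (GG_value X) (GG_value Y) (GG_subgroup X) (GG_complete Y) bf.
have [Psi [PsiS Psi_add Psi_iso Psi_h]] :=
  limit_exists (GG_value Y) (GG_value X) (GG_subgroup Y) (GG_complete X) (back_and_forth_shift bf).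
exists Phi, Psi; split=> //; split=> //.
- exact: (limit_inverse (GG_value X) (GG_subgroup X) (GG_subgroup Y) bf PhiT Phi_add Phi_iso Phi_f Psi_add Psi_iso Psi_h).
- apply: (limit_inverse (GG_value Y) (GG_subgroup Y) (GG_subgroup X) (back_and_forth_shift bf)
    PsiS Psi_add Psi_iso Psi_h Phi_add Phi_iso).
  by move=> k a Aa; have := Phi_f _ _ Aa; have := tol_le (leqnSn k); lra.
Qed.

Lemma eq_mod_prod (I : eqType) (r : seq I) (F : I -> nat) a b :
  uniq r -> {in r &, forall i j, i != j -> coprime (F i) (F j)} ->
  (forall j, j \in r -> a = b %[mod F j]) -> a = b %[mod \prod_(j <- r) F j].
Proof.
elim: r => [|j r IH]; first by rewrite big_nil !modn1.
rewrite cons_uniq => /andP [jr r_uniq] cop ab; rewrite big_cons; apply/eqP.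
have cop_j : coprime (F j) (\prod_(k <- r) F k).
  rewrite big_seq; elim/big_ind: _ => [|m n cm cn|k rk]; rewrite ?coprimen1 ?coprimeMr ?cm //.
  by apply: cop; rewrite ?inE ?rk ?eqxx ?orbT //; apply: contraNneq jr => ->.
rewrite chinese_remainder // (ab j (mem_head _ _)) eqxx /=; apply/eqP/IH => // [x y xr yr|k kr].
  by apply: cop; rewrite inE ?xr ?yr orbT.
by apply: ab; rewrite inE kr orbT.
Qed.

Section Idempotents.
Variables (s : nat) (Ns : 'I_s -> nat).
Hypothesis hcop : forall i j, i != j -> coprime (Ns i) (Ns j).

Let N := (\prod_(i < s) Ns i)%N.
Let cofactor i := (\prod_(j < s | j != i) Ns j)%N.

(* e i is 1 modulo Ns i and 0 modulo every other Ns j: multiplication by e i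
   projects an N-torsion group onto its Ns i-torsion part. *)
Definition idem i := chinese (Ns i) (cofactor i) 1 0.

Let coprime_cofactor i : coprime (Ns i) (cofactor i).
Proof.
rewrite /cofactor; elim/big_ind: _ => [|m n cm cn|j ji]; rewrite ?coprimen1 ?coprimeMr ?cm //.
by apply: hcop; rewrite eq_sym.
Qed.

Let N_split i : N = (Ns i * cofactor i)%N.
Proof. by rewrite /N (bigD1 i). Qed.

Lemma idem_mod i : idem i = 1 %[mod Ns i].
Proof. by rewrite /idem chinese_modl ?coprime_cofactor. Qed.

Lemma dvdn_idem i j : j != i -> (Ns j %| idem i)%N.
Proof.
move=> ji; apply: (@dvdn_trans (cofactor i)); first by rewrite /cofactor (bigD1 j) // dvdn_mulr.
by rewrite /dvdn /idem chinese_modr ?coprime_cofactor // mod0n.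
Qed.

Lemma dvdn_idemM i : (N %| idem i * Ns i)%N.
Proof.
rewrite (N_split i) mulnC dvdn_mul //.
by rewrite /dvdn /idem chinese_modr ?coprime_cofactor // mod0n.
Qed.

Lemma sum_idem_mod : (\sum_(i < s) idem i)%N = 1 %[mod N].
Proof.
apply: eq_mod_prod => [|i j _ _|j _]; [exact: index_enum_uniq | exact: hcop |].
have /eqP others : (Ns j %| \sum_(i < s | i != j) idem i)%N.
  by apply: dvdn_sum => i ij; apply: dvdn_idem; rewrite eq_sym.
by rewrite (bigD1 j) //= -modnDm others addn0 modn_mod idem_mod.
Qed.

End Idempotents.

Lemma GG_on_torsion (r : option R) (N M : nat) (G : zmodType) (p : G -> R)
    (hG : is_GG r N p) (MN : (M %| N)%N) (N_gt0 : (0 < N)%N)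
    (e : nat) (e_mod : e = 1 %[mod M]) (dvdN_eM : (N %| e * M)%N) :
  GG_on r M p (fun x => x *+ M = 0).
Proof.
case: hG => [[complete_p [hp [d d_dense] _ bounded exp_N]] extension _].
have N_neq0 : N <> 0%N by move=> N0; rewrite N0 in N_gt0.
have M_gt0 : (0 < M)%N := dvdn_gt0 N_gt0 MN.
have M_neq0 : M <> 0%N by move=> M0; rewrite M0 in M_gt0.
have e_id (x : G) : x *+ M = 0 -> x *+ e = x.
  by move=> xM; rewrite (mulrn_modn e xM) e_mod -(mulrn_modn 1 xM).
have e_tor (x : G) : (x *+ e) *+ M = 0.
  by rewrite -mulrnA (mulrn_modn _ (exp_N N_neq0 x)); move/eqP: dvdN_eM => ->.
split=> //; first exact: subgroup_torsion.
- exists (fun n => d n *+ e); split=> // x xM eps eps_gt0.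
  have e1_gt0 : 0 < e%:R + 1 :> R by rewrite ltr_wpDl.
  have [n xd] := d_dense x (eps / (e%:R + 1)) (divr_gt0 eps_gt0 e1_gt0); exists n.
  rewrite -{1}(e_id x xM) -mulrnBl; apply: le_lt_trans (value_mulrn hp _ _) _.
  have := value_ge0 hp (x - d n); have : eps / (e%:R + 1) * (e%:R + 1) = eps by rewrite divfK ?gt_eqF.
  have := ler0n R e; nra.
- move=> u uM u_cauchy; have [l ul] := complete_p u u_cauchy; exists l => //.
  apply: (value_le0_eq hp); rewrite subr0; apply: (@ler_addgt0_scaled _ _ _ (M%:R + 1)) => [|eps eps_gt0].
    by rewrite ltr_wpDl.
  have [n ul_n] := ul eps eps_gt0; have := ul_n n (leqnn n).
  rewrite value_distC // => close.
  have -> : l *+ M = (l - u n) *+ M by rewrite mulrnBl (uM n) subr0.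
  apply: le_trans (value_mulrn hp _ _) _.
  have := ler0n R M; have := value_ge0 hp (l - u n); nra.
- move=> H q hq exp_M q_bd K K0 KB phi phi_add phi_iso eps eps01.
  have exp_N' : exponent_cond H N.
    by move=> _ x; rewrite -(divnK MN) mulnC mulrnA exp_M // mul0rn.
  have [phi_e [phi_e_add phi_e_close phi_e_iso]] :=
    extension H q hq exp_N' q_bd K K0 KB phi phi_add phi_iso eps eps01.
  exists phi_e; split=> // x.
  have hH : subgroup (fun _ : H => True) by [].
  have phi_e_add' : additive_on (fun _ => True) phi_e by move=> y z _ _; apply: phi_e_add.
  by rewrite -(additiveMn hH phi_e_add') // exp_M // (additive0 hH phi_e_add').
Qed.

Definition isometric_iso_on (G H : zmodType) (S : G -> Prop) (p : G -> R) (q : H -> R)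
    (phi : G -> H) (psi : H -> G) :=
  [/\ additive_on S phi, (forall x, S x -> q (phi x) = p x), (forall y, S (psi y)),
      (forall x, S x -> psi (phi x) = x) & (forall y, phi (psi y) = y)].

Section IsometricIso.
Variables (G H : zmodType) (S : G -> Prop) (p : G -> R) (q : H -> R) (phi : G -> H) (psi : H -> G).
Hypotheses (hS : subgroup S) (hp : is_value p) (iso : isometric_iso_on S p q phi psi).

Lemma iso_on_inv_value y : p (psi y) = q y.
Proof. by case: iso => _ phi_iso psiS _ psiK; rewrite -phi_iso // psiK. Qed.

Lemma iso_on_inv_add : additive_on (fun _ => True) psi.
Proof.
case: iso => phi_add phi_iso psiS phiK psiK y y' _ _.
have SD := subgroupD hS (psiS y) (psiS y'); apply: (value_le0_eq hp).
rewrite -phi_iso; last exact: (subgroupB hS).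
rewrite (additiveB hS phi_add) // phi_add // !psiK subrr.
by rewrite -(additive0 hS phi_add) phi_iso ?(value0 hp) //; apply: subgroup0.
Qed.

End IsometricIso.

Section TorsionDecomposition.
Variables (s : nat) (Ns : 'I_s -> nat).
Hypothesis hcop : forall i j, i != j -> coprime (Ns i) (Ns j).
Variables (G : zmodType) (p : G -> R).
Hypotheses (hp : is_value p) (torN : forall x : G, x *+ (\prod_(i < s) Ns i) = 0).

Let e := idem Ns.

Lemma idem_torsion i (x : G) : (x *+ e i) *+ Ns i = 0.
Proof. by rewrite -mulrnA (mulrn_modn _ (torN x)); move/eqP: (dvdn_idemM hcop i) => ->. Qed.

Lemma idem_id i (x : G) : x *+ Ns i = 0 -> x *+ e i = x.
Proof. by move=> xN; rewrite (mulrn_modn _ xN) idem_mod // -(mulrn_modn 1 xN). Qed.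

Lemma idem_kill i j (x : G) : j != i -> x *+ Ns j = 0 -> x *+ e i = 0.
Proof. by move=> ji xN; rewrite (mulrn_modn _ xN); move/eqP: (dvdn_idem hcop ji) => ->. Qed.

Lemma sum_idem (x : G) : \sum_(i < s) x *+ e i = x.
Proof. by rewrite sumrMnr (mulrn_modn _ (torN x)) sum_idem_mod // -(mulrn_modn 1 (torN x)). Qed.

Variable Gs : 'I_s -> zmodType.
Local Unset Implicit Arguments.
Variables (ps : forall i, Gs i -> R) (Phi : forall i, G -> Gs i) (Psi : forall i, Gs i -> G).
Hypothesis iso : forall i, isometric_iso_on (fun x => x *+ Ns i = 0) p (ps i) (Phi i) (Psi i).
Local Set Implicit Arguments.

Let proj (x : G) : forall i, Gs i := fun i => Phi i (x *+ e i).
Let glue (z : forall i, Gs i) : G := \sum_(i < s) Psi i (z i).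

Lemma projB x y i : proj y i - proj x i = Phi i ((y - x) *+ e i).
Proof.
have [Phi_add _ _ _ _] := iso i.
by rewrite /proj mulrnBl (additiveB (subgroup_torsion _ _) Phi_add) ?idem_torsion.
Qed.

Lemma proj_continuous x eps : 0 < eps -> exists2 d : R, 0 < d &
  forall y, p (y - x) < d -> forall i, ps i (proj y i - proj x i) < eps.
Proof.
move=> eps_gt0; pose E : R := (\sum_(i < s) e i)%N%:R.
have E_gt0 : 0 < E + 1 by rewrite ltr_wpDl.
exists (eps / (E + 1)) => [|y yx i]; first exact: divr_gt0.
have [_ Phi_iso _ _ _] := iso i.
have eE : (e i)%:R <= E by rewrite ler_nat (bigD1 i) //= leq_addr.
rewrite projB Phi_iso ?idem_torsion //; apply: le_lt_trans (value_mulrn hp _ _) _.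
have := value_ge0 hp (y - x); have : eps / (E + 1) * (E + 1) = eps by rewrite divfK ?gt_eqF.
have := ler0n R (e i); nra.
Qed.

Lemma glueB y z : glue z - glue y = \sum_(i < s) Psi i (z i - y i).
Proof.
rewrite /glue -sumrB; apply: eq_bigr => i _.
by rewrite (additiveB (S := fun _ => True) _ (iso_on_inv_add (subgroup_torsion _ _) hp (iso i))).
Qed.

Lemma glue_continuous y eps : 0 < eps -> exists2 d : R, 0 < d &
  forall z, (forall i, ps i (z i - y i) < d) -> p (glue z - glue y) < eps.
Proof.
move=> eps_gt0; have s1_gt0 : 0 < s%:R + 1 :> R by rewrite ltr_wpDl.
exists (eps / (s%:R + 1)) => [|z zy]; first exact: divr_gt0.
rewrite glueB; apply: le_lt_trans (value_sum hp _ _) _.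
under eq_bigr => i _ do rewrite (iso_on_inv_value (iso i)).
apply: le_lt_trans (_ : \sum_(i < s) eps / (s%:R + 1) < eps).
  by apply: ler_sum => i _; apply: ltW.
rewrite sumr_const card_ord -[_ *+ s]mulr_natr.
have : eps / (s%:R + 1) * (s%:R + 1) = eps by rewrite divfK ?gt_eqF.
have := divr_gt0 eps_gt0 s1_gt0; have := ler0n R s; nra.
Qed.

Lemma top_group_iso_of_torsion : top_group_iso p ps.
Proof.
exists proj, glue; split.
- move=> x y i; have [Phi_add _ _ _ _] := iso i.
  by rewrite /proj mulrnDl Phi_add ?idem_torsion.
- move=> x; rewrite /glue /proj -[RHS]sum_idem; apply: eq_bigr => i _.
  by have [_ _ _ PsiK _] := iso i; rewrite PsiK ?idem_torsion.
- move=> z; apply: functional_extensionality_dep => i.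
  rewrite /proj /glue -sumrMnl (bigD1 i) //= big1 => [|j ji]; last first.
    by have [_ _ Psi_tor _ _] := iso j; apply: (idem_kill ji).
  by have [_ _ Psi_tor _ PhiK] := iso i; rewrite addr0 idem_id.
- exact: proj_continuous.
- exact: glue_continuous.
Qed.

End TorsionDecomposition.

Theorem proposition4p9
  (r : option R) (hr : r = Some 1 \/ r = None)
  (s : nat) (Ns : 'I_s -> nat)
  (hNs2 : forall i, (2 <= Ns i)%N)
  (hcop : forall i j, i != j -> coprime (Ns i) (Ns j))
  (N : nat) (hN : N = (\prod_(i < s) Ns i)%N)
  (G : zmodType) (p : G -> R) (hG : is_GG r N p)
  (Gs : 'I_s -> zmodType) (ps : forall i, Gs i -> R)
  (hGs : forall i, is_GG r (Ns i) (ps i)) :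
  top_group_iso p ps.
Proof.
have N_gt0 : (0 < N)%N by rewrite hN prodn_gt0 // => i; apply: leq_trans (hNs2 i).
have Ns_gt0 i : (0 < Ns i)%N by apply: leq_trans (hNs2 i).
have [[_ [hp _ _ _ exp_N]] _ _] := hG.
have torN (x : G) : x *+ (\prod_(i < s) Ns i) = 0 by rewrite -hN; apply: exp_N; lia.
have isos i : exists PP : (G -> Gs i) * (Gs i -> G),
    isometric_iso_on (fun x => x *+ Ns i = 0) p (ps i) PP.1 PP.2.
  have torGs (y : Gs i) : y *+ Ns i = 0.
    by have [[_ [_ _ _ _ exp_i]] _ _] := hGs i; apply: exp_i; have := Ns_gt0 i; lia.
  have dvdN_idem : (N %| idem Ns i * Ns i)%N by rewrite hN dvdn_idemM.
  have NsN : (Ns i %| N)%N by rewrite hN (bigD1 i) //= dvdn_mulr.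
  have [Phi [Psi [[_ PsiS Phi_add _ Phi_iso] [_ PsiK PhiK]]]] := GG_on_unique hr (hNs2 i)
    (GG_on_torsion hG NsN N_gt0 (idem_mod hcop i) dvdN_idem)
    (GG_on_torsion (hGs i) (dvdnn _) (Ns_gt0 i) (erefl (1 %% Ns i)%N) (dvdn_mull _ (dvdnn _))).
  by exists (Phi, Psi); split=> // y; [apply/PsiS/torGs | apply/PhiK/torGs].
have [iso isoP] := non_dep_dep_functional_choice choice _ _ isos.
exact: (top_group_iso_of_torsion hcop hp torN isoP).
Qed.
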